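(* Let $A\subset\mathcal R$ be a zone with width $w(A)=w$. Then there is a unique finite Puiseux series $$p(y)=a_1y^{r_1}+\cdots+a_ny^{r_n},$$ with $r_i$ positive rational numbers, $r_1<\cdots<r_n<\frac1w$, such that every $\alpha\in A$ has the form $$\alpha(y)=p(y)+\mathrm{h.o.t.}_{\ge \frac1w},$$ where $\mathrm{h.o.t.}_{\ge\frac1w}$ denotes a sum of nonzero terms of order greater than or equal to $\frac1w$.
   Context: Let $\mathcal R$ be the set of germs at $0$ of analytic arcs $\{x=\alpha(y),\ y\ge 0\}$ in the closed upper half-plane of $\mathbb R^2$ (half-branches of analytic curves through $0$), where $\alpha$ is given by a convergent Puiseux series $\alpha(y)=\sum_i c_iy^{p_i}$ with positive rational exponents $p_1<p_2<\cdots$. The order $\mathcal O(\gamma)$ of a Puiseux series $\gamma$ is the smallest exponent appearing with nonzero coefficient ($\mathcal O(0)=+\infty$). For $\alpha,\beta\in\mathcal R$ write $\alpha<\beta$ if $\alpha(y)<\beta(y)$ for all sufficiently small $y>0$. A subset $A\subset\mathcal R$ is a zone (is connected) if whenever $\alpha,\beta\in A$ with $\alpha<\beta$ and $\gamma\in\mathcal R$ with $\alpha<\gamma<\beta$, then $\gamma\in A$. The distance of two arcs is $d(\alpha,\beta)=1/\mathcal O(\alpha-\beta)$ (with $1/\infty=0$), and the width of a zone is $w(A)=\sup\{d(\alpha,\beta):\alpha,\beta\in A\}$. *)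

From HB Require Import structures.
From mathcomp Require Import all_boot all_order all_algebra.
From mathcomp Require Import all_classical all_reals all_analysis.
Set Implicit Arguments. Unset Strict Implicit. Unset Printing Implicit Defensive.
Import Order.TTheory GRing.Theory Num.Theory.
Import numFieldNormedType.Exports.
Local Open Scope classical_set_scope.
Local Open Scope ring_scope.

Section Arcs.
Variable R : realType.

(* A (Puiseux) series is given by its coefficient function: c q is the
   coefficient of y^q, for q a rational exponent. *)

Definition puiseux_on (c : rat -> R) (N : nat) : Prop :=
  (0 < N)%N /\ forall q : rat, c q != 0 ->
    exists k : nat, (0 < k)%N /\ q = k%:Q / N%:Q.

Definition puiseux_term (c : rat -> R) (N : nat) (y : R) (k : nat) : R :=
  c (k%:Q / N%:Q) * y `^ (ratr (k%:Q / N%:Q)).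

(* c is a convergent Puiseux series with positive rational exponents:
   sum_k c(k/N) t^k has positive radius of convergence. *)
Definition is_arc (c : rat -> R) : Prop :=
  exists N : nat, puiseux_on c N /\
    exists t : R, 0 < t /\ exists l : R, series (fun k => `|c (k%:Q / N%:Q)| * t ^+ k) @ \oo --> l.

Definition arc_lt (a b : rat -> R) : Prop :=
  exists N : nat, puiseux_on a N /\ puiseux_on b N /\
    exists e : R, 0 < e /\ forall y : R, 0 < y < e ->
      exists l : R, series (puiseux_term (b \- a) N y) @ \oo --> l /\ 0 < l.

(* A zone: a connected subset of the set of arcs. *)
Definition zone (A : set (rat -> R)) : Prop :=
  (forall a, A a -> is_arc a) /\
  forall a b g, A a -> A b -> is_arc g -> arc_lt a b -> arc_lt a g -> arc_lt g b -> A g.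

(* Order of a Puiseux series: smallest exponent with nonzero coefficient
   (+oo for the zero series). *)
Definition order (c : rat -> R) : \bar R :=
  ereal_inf [set (ratr q)%:E | q in [set q | c q != 0]].

Definition erecip (x : \bar R) : \bar R :=
  match x with
  | r%:E => (r^-1)%:E
  | +oo%E => 0%E
  | -oo%E => 0%E
  end.

Definition arc_dist (a b : rat -> R) : \bar R := erecip (order (a \- b)).

Definition width (A : set (rat -> R)) : \bar R :=
  ereal_sup [set arc_dist a b | a in A & b in A].

End Arcs.

From Pilot Require Import Defs.
From HB Require Import structures.
From mathcomp Require Import all_boot all_order all_algebra.
From mathcomp Require Import all_classical all_reals all_analysis.
Set Implicit Arguments. Unset Strict Implicit. Unset Printing Implicit Defensive.
Import Order.TTheory GRing.Theory Num.Theory.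
Local Open Scope classical_set_scope.
Local Open Scope ring_scope.

(* Two arcs of A are at distance at most w, so their difference has order at
   least 1/w: all arcs of A share their coefficients of exponent < 1/w.  Hence
   p is the truncation below 1/w of any fixed arc of A; it is a finite sum
   because the exponents of an arc lie in (1/N)N, and it is unique because the
   exponent ranges < 1/w and >= 1/w of two candidates are disjoint. *)

Section PuiseuxTruncation.
Variable R : realType.
Implicit Types (a b c p : rat -> R) (N : nat) (q : rat) (s w : \bar R).

Lemma ratr_natdiv (k N : nat) : ratr (k%:Q / N%:Q) = (k%:R / N%:R :> R).
Proof. by rewrite fmorph_div !rmorph_int. Qed.

Lemma puiseux_on_gt0 c N q : puiseux_on c N -> c q != 0 -> 0 < q.
Proof. by move=> [N0 supp] /supp [k [k0 ->]]; rewrite divr_gt0 ?ltr0n. Qed.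

Lemma puiseux_on_ratr_ge c N q :
  puiseux_on c N -> c q != 0 -> N%:R^-1 <= ratr q :> R.
Proof.
move=> [_ supp] /supp [k [k0 ->]]; rewrite ratr_natdiv -[leLHS]mul1r.
by rewrite ler_wpM2r ?invr_ge0 ?ler0n ?ler1n.
Qed.

Lemma order_le c q : c q != 0 -> (Defs.order c <= (ratr q)%:E)%E.
Proof. by move=> cq; apply: ereal_inf_lbound; exists q. Qed.

Lemma order_ge c (x : R) :
  (forall q, c q != 0 -> x <= ratr q) -> (x%:E <= Defs.order c)%E.
Proof. by move=> lex; apply: le_ereal_inf_tmp => _ [q cq <-]; rewrite lee_fin lex. Qed.

Lemma order_sub_gt0 a b Na Nb :
  puiseux_on a Na -> puiseux_on b Nb -> (0 < Defs.order (a \- b)%R)%E.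
Proof.
move=> aN bN; have [[Na0 _] [Nb0 _]] := (aN, bN).
pose m : R := Num.min (Na%:R^-1) (Nb%:R^-1).
apply: (@lt_le_trans _ _ m%:E).
  by rewrite lte_fin lt_min !invr_gt0 !ltr0n Na0 Nb0.
apply: order_ge => q /=; have [-> | aq _] := eqVneq (a q) 0; last first.
  by rewrite ge_min (puiseux_on_ratr_ge aN aq).
rewrite sub0r oppr_eq0 => bq.
by rewrite ge_min (puiseux_on_ratr_ge bN bq) orbT.
Qed.

Lemma erecip_fin_num (x : \bar R) : erecip x \is a fin_num.
Proof. by case: x. Qed.

Lemma erecip_le_swap x w :
  (0 < x)%E -> (0 < w)%E -> (erecip x <= w)%E -> (erecip w <= x)%E.
Proof.
case: x => [r| |] //; case: w => [t| |] //=; rewrite ?lte_fin ?lee_fin ?leey //.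
  by move=> r0 t0; rewrite -[leRHS]invrK lef_pV2 ?posrE ?invr_gt0.
by move=> /ltW.
Qed.

Lemma arc_dist_le_width A a b : A a -> A b -> (arc_dist a b <= width A)%E.
Proof. by move=> Aa Ab; apply: ereal_sup_ubound; exists a => //; exists b. Qed.

Lemma width_gt0_nonempty A : (0 < width A)%E -> exists a, A a.
Proof. by move=> /ereal_sup_gt [_ [a Aa _] _]; exists a. Qed.

Lemma coef_eq_below_dist a b Na Nb w q :
  puiseux_on a Na -> puiseux_on b Nb -> (0 < w)%E -> (arc_dist a b <= w)%E ->
  (a \- b) q != 0 -> (erecip w <= (ratr q)%:E)%E.
Proof.
move=> aN bN w0 abw abq; apply: le_trans (order_le abq).
exact: erecip_le_swap (order_sub_gt0 aN bN) w0 abw.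
Qed.

Definition truncate s c q : R := if ((ratr q)%:E < s)%E then c q else 0.

Lemma truncate_neq0 s c q :
  truncate s c q != 0 -> c q != 0 /\ ((ratr q)%:E < s)%E.
Proof. by rewrite /truncate; case: ifP; rewrite ?eqxx. Qed.

Lemma sub_truncate_ge s b c q :
  (forall q, (b \- c) q != 0 -> (s <= (ratr q)%:E)%E) ->
  (b \- truncate s c) q != 0 -> (s <= (ratr q)%:E)%E.
Proof.
move=> agree; rewrite /= /truncate; case: ifP => [_ /agree // | /negbT + _].
by rewrite -leNgt.
Qed.

Lemma finite_support_below c N (x : R) :
  puiseux_on c N -> finite_set [set q | c q != 0 /\ ratr q < x].
Proof.
move=> [N0 supp]; pose M := Num.Def.archi_bound (N%:R * `|x|).
apply: (sub_finite_set (B := [set k%:Q / N%:Q | k in `I_M])).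
  move=> q [/supp [k [_ qk]] qx]; exists k => //=; rewrite -(ltr_nat R).
  apply: lt_le_trans (ltW (archi_boundP (mulr_ge0 (ler0n _ _) (normr_ge0 x)))).
  move: qx; rewrite qk ratr_natdiv ltr_pdivrMr ?ltr0n // mulrC => kx.
  by apply: lt_le_trans kx _; rewrite ler_wpM2l ?ler0n ?ler_norm.
exact/finite_image/finite_II.
Qed.

Lemma finite_support_truncate s c N :
  s \is a fin_num -> puiseux_on c N -> finite_set [set q | truncate s c q != 0].
Proof.
move: s => [x| |] // _ cN; apply: sub_finite_set (finite_support_below x cN).
by move=> q /truncate_neq0 [cq]; rewrite lte_fin.
Qed.

Lemma split_at_unique s a p1 p2 :
  (forall q, p1 q != 0 -> ((ratr q)%:E < s)%E) ->
  (forall q, p2 q != 0 -> ((ratr q)%:E < s)%E) ->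
  (forall q, (a \- p1) q != 0 -> (s <= (ratr q)%:E)%E) ->
  (forall q, (a \- p2) q != 0 -> (s <= (ratr q)%:E)%E) ->
  p1 = p2.
Proof.
move=> p1s p2s ap1s ap2s; apply/funext => q; apply/eqP/negPn/negP => p12.
have qs : ((ratr q)%:E < s)%E.
  have [p1q0|/p1s //] := eqVneq (p1 q) 0.
  by apply: p2s; rewrite -p1q0 eq_sym.
suff : (s <= (ratr q)%:E)%E by rewrite leNgt qs.
have [a1|/ap1s //] := eqVneq ((a \- p1) q) 0; apply: ap2s.
by move: a1 p12 => /= /eqP; rewrite !subr_eq0 => /eqP ->.
Qed.

End PuiseuxTruncation.

Theorem lemma5p1 (R : realType) (A : set (rat -> R)) (w : \bar R) :
  zone A -> width A = w -> (0 < w)%E ->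
  exists! p : rat -> R,
    [/\ finite_set [set q | p q != 0],
        (forall q, p q != 0 -> 0 < q /\ ((ratr q)%:E < erecip w)%E) &
        forall a, A a ->
          forall q, (a \- p) q != 0 -> (erecip w <= (ratr q)%:E)%E].
Proof.
move=> [arcA _] <- w0.
have [a0 Aa0] := width_gt0_nonempty w0.
have [N [a0N _]] := arcA _ Aa0.
have agree b : A b ->
    forall q, (b \- a0) q != 0 -> (erecip (width A) <= (ratr q)%:E)%E.
  move=> Ab q; have [Nb [bN _]] := arcA _ Ab.
  exact: coef_eq_below_dist bN a0N w0 (arc_dist_le_width Ab Aa0).
exists (truncate (erecip (width A)) a0); split.
  split.
  - exact: finite_support_truncate (erecip_fin_num _) a0N.
  - move=> q /truncate_neq0 [a0q qs].
    by split => //; exact: puiseux_on_gt0 a0N a0q.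
  - by move=> b Ab q; apply: sub_truncate_ge; exact: agree.
move=> p [_ p_below a0p_above].
apply: (split_at_unique (s := erecip (width A)) (a := a0)).
- by move=> q /truncate_neq0 [].
- by move=> q /p_below [].
- by move=> q; apply: sub_truncate_ge; exact: agree.
- exact: a0p_above.
Qed.
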